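(* Let $\mathbb{V}$ be a BIT speciale variety, $A$ a $\mathbb{V}$-algebra and $H$ a subset of $A$ with $0\in H$. Then for every $a\in A$, the equivalence class of $a$ with respect to $\sim_H$ is contained in $\theta(H,\dots,H,a)$.
   Context: BIT speciale: the algebraic theory of $\mathbb{V}$ contains a constant $0$ and, for some $n\ge1$, binary terms $\alpha_1,\dots,\alpha_n$ and an $(n+1)$-ary term $\theta$ such that $\alpha_i(x,x)=0$ ($1\le i\le n$) and $\theta(\alpha_1(x,y),\dots,\alpha_n(x,y),y)=x$ are identities of $\mathbb{V}$. Notation: $\theta(H,\dots,H,a)=\{\theta(h_1,\dots,h_n,a)\mid h_1,\dots,h_n\in H\}$. For $a,b\in A$, $a\sim_H b$ iff $\theta(H,\dots,H,a)=\theta(H,\dots,H,b)$. *)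

From mathcomp Require Import all_boot.
Set Implicit Arguments. Unset Strict Implicit. Unset Printing Implicit Defensive.

(* An algebra A of a BIT speciale variety, seen through the interpretations in A
   of the distinguished terms: the constant 0, the binary terms alpha_1..alpha_n
   (indexed by 'I_n) and the (n+1)-ary term theta (its first n arguments given as
   a function 'I_n -> A, the last one separately).  The identities of the variety
   hold in every V-algebra, so they hold for these interpretations. *)
Record BITAlgebra (n : nat) := {
  carrier :> Type;
  bzero : carrier;
  balpha : 'I_n -> carrier -> carrier -> carrier;
  btheta : ('I_n -> carrier) -> carrier -> carrier;
  balpha_xx : forall i x, balpha i x x = bzero;
  btheta_alpha : forall x y, btheta (fun i => balpha i x y) y = x
}.

Definition theta_set (n : nat) (A : BITAlgebra n) (H : A -> Prop) (a : A) : A -> Prop :=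
  fun x => exists h : 'I_n -> A, (forall i, H (h i)) /\ x = btheta h a.

Definition simH (n : nat) (A : BITAlgebra n) (H : A -> Prop) (a b : A) : Prop :=
  forall x, theta_set H a x <-> theta_set H b x.

From mathcomp Require Import all_boot.

Lemma mem_theta_set_self (n : nat) (A : BITAlgebra n) (H : A -> Prop) (a : A) :
  H (bzero A) -> theta_set H a a.
Proof.
move=> H0; exists (fun i => balpha i a a); split.
- by move=> i; rewrite balpha_xx.
- by rewrite btheta_alpha.
Qed.

Theorem lemma2p2 (n : nat) (hn : 1 <= n) (A : BITAlgebra n) (H : A -> Prop)
  (H0 : H (bzero A)) (a : A) :
  forall b : A, simH H b a -> theta_set H a b.
Proof.
by move=> b /(_ b) simHb; apply/simHb/mem_theta_set_self.
Qed.
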